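(* Let $(R,\mathfrak m)$ be a complete Noetherian local ring and let $\Omega$ be an inverse poset. Let $\{p'_j\mid j\in\Omega\}$ be pair operations defined on the class of all pairs $(L,M)$ of Matlis-dualizable $R$-modules with $L\subseteq M$, such that $p'_i\le p'_j$ whenever $i\le j$, and let $p'=\varprojlim_{j\in\Omega}p'_j$, i.e. $p'(L,M)=\bigcap_{j\in\Omega}p'_j(L,M)$. If every $p'_j$ is cohereditary, then so is $p'$.
   Context: With $E$ the injective hull of the residue field and $(-)^\vee=\operatorname{Hom}_R(-,E)$, $M$ is Matlis-dualizable if the natural map $M\to M^{\vee\vee}$ is an isomorphism. A pair operation assigns to each pair $(L,M)$ a submodule $p(L,M)\subseteq M$ with $\phi(p(L,M))=p(\phi(L),M')$ for every isomorphism $\phi:M\to M'$. $p\le p'$ means $p(L,M)\subseteq p'(L,M)$ for all pairs. An inverse poset is a poset $\Omega$ such that any two elements have a common lower bound. $p$ is cohereditary if $p(N/L,M/L)=(p(N,M)+L)/L$ whenever $L\subseteq N\subseteq M$. *)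

From HB Require Import structures.
From mathcomp Require Import all_boot all_order all_algebra.
Set Implicit Arguments. Unset Strict Implicit. Unset Printing Implicit Defensive.
Import Order.TTheory GRing.Theory.
Local Open Scope ring_scope.

Section CommAlg.
Variable R : comNzRingType.

Definition ideal (I : R -> Prop) : Prop :=
  [/\ I 0, (forall x y, I x -> I y -> I (x + y)) & (forall r x, I x -> I (r * x))].

Definition maximal_ideal (m : R -> Prop) : Prop :=
  [/\ ideal m, ~ m 1 &
      forall J, ideal J -> (forall x, m x -> J x) -> ~ J 1 -> forall x, J x -> m x].

Definition local_ring (m : R -> Prop) : Prop :=
  maximal_ideal m /\ forall n, maximal_ideal n -> forall x, n x <-> m x.

Definition noetherian_ring : Prop :=
  forall I : nat -> R -> Prop, (forall n, ideal (I n)) ->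
    (forall n x, I n x -> I n.+1 x) ->
    exists N, forall n, (N <= n)%N -> forall x, I n x <-> I N x.

Fixpoint idpow (m : R -> Prop) (n : nat) : R -> Prop :=
  match n with
  | 0 => fun _ => True
  | n'.+1 => fun x => exists s : seq (R * R),
      (forall q, q \in s -> m q.1 /\ idpow m n' q.2) /\
      x = \sum_(q <- s) q.1 * q.2
  end.

Definition madic_complete (m : R -> Prop) : Prop :=
  (forall x, (forall n, idpow m n x) -> x = 0) /\
  (forall u : nat -> R,
      (forall n, exists N, forall i j, (N <= i)%N -> (N <= j)%N ->
         idpow m n (u i - u j)) ->
      exists y, forall n, exists N, forall i, (N <= i)%N -> idpow m n (y - u i)).

Definition lin (M N : lmodType R) (f : M -> N) : Prop :=
  forall (r : R) (x y : M), f (r *: x + y) = r *: f x + f y.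

Definition submod (M : lmodType R) (L : M -> Prop) : Prop :=
  [/\ L 0, (forall x y, L x -> L y -> L (x + y)) & (forall r x, L x -> L (r *: x))].

Definition subset_of (M : lmodType R) (A B : M -> Prop) : Prop :=
  forall x, A x -> B x.

Definition image_of (M N : lmodType R) (f : M -> N) (A : M -> Prop) : N -> Prop :=
  fun y => exists2 x, A x & f x = y.

(* E is an injective hull of the residue field R/m: E is injective, and E is an
   essential extension of a copy R e of R/m (ann e = m). *)
Definition injective_module (E : lmodType R) : Prop :=
  forall (A B : lmodType R) (i : A -> B) (g : A -> E),
    lin i -> injective i -> lin g ->
    exists h : B -> E, lin h /\ forall a, h (i a) = g a.

Definition injective_hull_residue_field (m : R -> Prop) (E : lmodType R) : Prop :=
  injective_module E /\
  exists e : E,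
    (forall r : R, r *: e = 0 <-> m r) /\
    (forall N : E -> Prop, submod N -> (exists2 y, N y & y <> 0) ->
       exists y, [/\ N y, y <> 0 & exists r : R, y = r *: e]).

(* Matlis-dualizable: the natural map M -> M^{vv} = Hom(Hom(M,E),E),
   x |-> (f |-> f x), is an isomorphism (i.e. a bijection, being linear).
   Elements of M^v are the linear maps M -> E, with pointwise operations;
   elements of M^{vv} are the R-linear maps Phi on M^v. *)
Definition matlis_dualizable (E M : lmodType R) : Prop :=
  (forall x y : M, (forall f : M -> E, lin f -> f x = f y) -> x = y) /\
  (forall Phi : (M -> E) -> E,
     (forall (r : R) (f g : M -> E), lin f -> lin g ->
        Phi (fun x => r *: f x + g x) = r *: Phi f + Phi g) ->
     exists x : M, forall f : M -> E, lin f -> Phi f = f x).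

(* p M L stands for p(L, M). *)
Definition pairop_t := forall M : lmodType R, (M -> Prop) -> (M -> Prop).

Definition is_pair_operation (E : lmodType R) (p : pairop_t) : Prop :=
  (forall (M : lmodType R) (L : M -> Prop),
     matlis_dualizable E M -> submod L -> submod (p M L)) /\
  (forall (M M' : lmodType R) (phi : M -> M') (L : M -> Prop),
     matlis_dualizable E M -> matlis_dualizable E M' -> submod L ->
     lin phi -> bijective phi ->
     forall y, image_of phi (p M L) y <-> p M' (image_of phi L) y).

Definition pairop_le (E : lmodType R) (p q : pairop_t) : Prop :=
  forall (M : lmodType R) (L : M -> Prop),
    matlis_dualizable E M -> submod L -> subset_of (p M L) (q M L).

(* Cohereditary: p(N/L, M/L) = (p(N,M)+L)/L for L <= N <= M.  The quotient
   M/L is represented by any surjective linear map f : M -> M'' with kernel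
   exactly L (pair operations are isomorphism invariant); then
   N/L = f(N) and (p(N,M)+L)/L = f(p(N,M)). *)
Definition cohereditary (E : lmodType R) (p : pairop_t) : Prop :=
  forall (M M'' : lmodType R) (L N : M -> Prop) (f : M -> M''),
    matlis_dualizable E M -> matlis_dualizable E M'' ->
    submod L -> submod N -> subset_of L N ->
    lin f -> (forall y : M'', exists x, f x = y) ->
    (forall x, f x = 0 <-> L x) ->
    forall y, p M'' (image_of f N) y <-> image_of f (p M N) y.

End CommAlg.

(* An element y of p'(N/L, M/L) lifts, for every j, to some x_j in p_j(N, M); the
   lifts are unique modulo K_j = p_j(N, M) /\ L, and for l <= j the coset x_l + K_l
   lies inside x_j + K_j, so the cosets form a down-directed family.  A
   Matlis-dualizable module M is linearly compact for such families: a functional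
   phi : M -> E killing some K_j takes the same value phi(x_j) at every x_j it
   can see, these values form a linear map on a submodule of M^v, injectivity of
   E extends it to all of M^v, and reflexivity of M turns the extension into
   evaluation at some x_0.  Since E is a cogenerator (over a Noetherian local
   ring every proper ideal lies in m = ann e), x_0 - x_j lies in K_j for all j,
   so x_0 is a common lift in p'(N, M). *)

From HB Require Import structures.
From mathcomp Require Import all_boot all_order all_algebra.
From mathcomp Require Import boolp classical_sets functions.
Import Order.TTheory GRing.Theory.
Local Open Scope ring_scope.

(* A Prop-valued submodule becomes a MathComp subtype through the boolean
   predicate [`[< S x >]]; the proof [HS] is part of the key so that the
   closedness instance below is found by unification. *)
Definition submod_mem {R : comNzRingType} {V : lmodType R} {S : V -> Prop}
    (HS : submod S) : pred V :=
  fun x => `[< S x >].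

Lemma submod_mem_closed {R : comNzRingType} {V : lmodType R} {S : V -> Prop}
    (HS : submod S) :
  subsemimod_closed (submod_mem HS).
Proof.
case: HS => S0 SD SZ; split; first split.
- exact/asboolP.
- by move=> x y /asboolP Sx /asboolP Sy; apply/asboolP/SD.
- by move=> r x /asboolP Sx; apply/asboolP/SZ.
Qed.

HB.instance Definition _ (R : comNzRingType) (V : lmodType R) (S : V -> Prop)
    (HS : submod S) :=
  GRing.isSubmodClosed.Build R V (submod_mem HS) (submod_mem_closed HS).

Definition submod_type {R : comNzRingType} {V : lmodType R} {S : V -> Prop}
    (HS : submod S) :=
  {x : V | x \in submod_mem HS}.

HB.instance Definition _ (R : comNzRingType) (V : lmodType R) (S : V -> Prop)
    (HS : submod S) :=
  [isSub of submod_type HS for @sval _ _].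
HB.instance Definition _ (R : comNzRingType) (V : lmodType R) (S : V -> Prop)
    (HS : submod S) :=
  [Choice of submod_type HS by <:].
HB.instance Definition _ (R : comNzRingType) (V : lmodType R) (S : V -> Prop)
    (HS : submod S) :=
  [SubChoice_isSubLmodule of submod_type HS by <:].

Section Submodules.
Context {R : comNzRingType} {M : lmodType R} {K : M -> Prop}.
Hypothesis HK : submod K.

Lemma submodB {x y} : K x -> K y -> K (x - y).
Proof. by case: HK => _ KD KZ Kx Ky; rewrite -scaleN1r addrC; apply/KD/Kx/KZ. Qed.

Lemma submodI {L : M -> Prop} : submod L -> submod (fun v => K v /\ L v).
Proof.
case: HK => K0 KD KZ [L0 LD LZ]; split=> //.
- by move=> u v [Ku Lu] [Kv Lv]; split; [apply: KD | apply: LD].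
- by move=> r v [Kv Lv]; split; [apply: KZ | apply: LZ].
Qed.

Lemma colon_ideal (z : M) : ideal (fun r : R => K (r *: z)).
Proof.
case: HK => K0 KD KZ; split.
- by rewrite scale0r.
- by move=> r s Kr Ks; rewrite scalerDl; apply: KD.
- by move=> r s Ks; rewrite -scalerA; apply: KZ.
Qed.

Lemma submod_add_line (z : M) : submod (fun v => exists r : R, K (v - r *: z)).
Proof.
case: HK => K0 KD KZ; split.
- by exists 0; rewrite scale0r subr0.
- move=> u v [r Kr] [s Ks]; exists (r + s).
  by rewrite scalerDl opprD addrACA; apply: KD.
- move=> a v [r Kr]; exists (a * r).
  by rewrite -scalerA -scalerBr; apply: KZ.
Qed.

End Submodules.

Section Linear.
Context {R : comNzRingType} {M N : lmodType R} {f : M -> N}.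
Hypothesis lf : lin f.

Lemma linB (a b : M) : f (a - b) = f a - f b.
Proof. by rewrite addrC -scaleN1r lf scaleN1r addrC. Qed.

End Linear.

Section InjectiveExtension.
Context {R : comNzRingType} {E : lmodType R}.
Hypothesis Einj : injective_module E.

Lemma injective_module_extend {M : lmodType R} {S : M -> Prop} (HS : submod S)
    (g : M -> E) :
  (forall r x y, S x -> S y -> g (r *: x + y) = r *: g x + g y) ->
  exists h : M -> E, lin h /\ forall x, S x -> h x = g x.
Proof.
move=> lg.
have Sval (u : submod_type HS) : S (val u) by apply/asboolP/(valP u).
have lgval : lin (g \o val : submod_type HS -> E).
  by move=> r u v /=; rewrite -lg //; apply: Sval.
have [h [lh hval]] := Einj _ _ _ _ (linearP val) val_inj lgval.
exists h; split=> // x Sx.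
exact: (hval (Sub x (asboolT Sx))).
Qed.

End InjectiveExtension.

Section MaximalIdeals.
Context {R : comNzRingType}.
Implicit Types I J : R -> Prop.

Lemma noetherian_maximal_element (P : (R -> Prop) -> Prop) I :
  noetherian_ring R -> (forall J, P J -> ideal J) -> P I ->
  exists J, [/\ P J, forall x, I x -> J x &
    forall J', P J' -> (forall x, J x -> J' x) -> forall x, J' x -> J x].
Proof.
move=> noethR Pideal PI; apply: contrapT => no_max.
pose T := {J | P J /\ forall x, I x -> J x}.
have grow (J : T) : exists J' : T,
    (forall x, sval J x -> sval J' x) /\ exists x, sval J' x /\ ~ sval J x.
  case: J => J [PJ IJ] /=; apply: contrapT => J_max; apply: no_max.
  exists J; split=> // J' PJ' JJ' x J'x; apply: contrapT => Jx; apply: J_max.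
  have IJ' x' : I x' -> J' x' by move=> /IJ /JJ'.
  by exists (exist _ J' (conj PJ' IJ')); split=> //; exists x.
have [next nextP] := choice grow.
pose I0 : T := exist _ I (conj PI (fun _ Ix => Ix)).
pose chain n := sval (iter n next I0).
have chain_ideal n : ideal (chain n).
  by apply: Pideal; rewrite /chain; case: (iter n next I0) => J [].
have chain_incr n x : chain n x -> chain n.+1 x.
  by case: (nextP (iter n next I0)) => chain_sub _; apply: chain_sub.
have [N stable] := noethR chain chain_ideal chain_incr.
have [_ [x [next_x chain_x]]] := nextP (iter N next I0).
by apply/chain_x/(stable N.+1 (leqnSn N)).
Qed.

Lemma local_proper_ideal_sub {m : R -> Prop} {I} :
  local_ring m -> noetherian_ring R -> ideal I -> ~ I 1 -> forall x, I x -> m x.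
Proof.
move=> [_ m_unique] noethR idI I1.
have [J [[idJ J1] IJ J_max]] := noetherian_maximal_element
  (fun J => ideal J /\ ~ J 1) I noethR (fun J => @proj1 _ _) (conj idI I1).
have maxJ : maximal_ideal J.
  by split=> // J' idJ' JJ' J'1; apply: J_max.
by move=> x /IJ /(m_unique J maxJ x).1.
Qed.

End MaximalIdeals.

Definition cogenerator {R : comNzRingType} (E : lmodType R) : Prop :=
  forall (M : lmodType R) (K : M -> Prop), submod K -> forall z, ~ K z ->
    exists f : M -> E, [/\ lin f, forall k, K k -> f k = 0 & f z <> 0].

Lemma injective_hull_residue_field_cogenerator (R : comNzRingType) (m : R -> Prop)
    (E : lmodType R) :
  local_ring m -> noetherian_ring R -> injective_hull_residue_field m E ->
  cogenerator E.
Proof.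
move=> locR noethR [Einj [e [ann_e _]]] M K HK z Kz.
have ann_colon r : K (r *: z) -> r *: e = 0.
  move=> Krz; apply/ann_e/(local_proper_ideal_sub locR noethR (colon_ideal HK z)) => //.
  by rewrite scale1r.
(* [coeff v] is some [r] with [v] in [K + r z]; it is determined only modulo the
   colon ideal [(K : z)], which lies in [m = ann e], so [coeff v *: e] is not. *)
pose coeff v := xget 0 (fun r : R => K (v - r *: z)).
have coeffE v r : K (v - r *: z) -> coeff v *: e = r *: e.
  move=> Kv; have Kv' : K (v - coeff v *: z).
    by apply: (@xgetPex _ 0 (fun s : R => K (v - s *: z))); exists r.
  apply/subr0_eq; rewrite -scalerBl; apply: ann_colon.
  have -> : (coeff v - r) *: z = (v - r *: z) - (v - coeff v *: z).
    by rewrite scalerBl opprB [RHS]addrC addrA subrK.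
  exact: submodB.
pose g v := coeff v *: e.
have [h [lh hg]] : exists h : M -> E,
    lin h /\ forall v, (exists r, K (v - r *: z)) -> h v = g v.
  apply: (injective_module_extend Einj (submod_add_line HK z)).
  move=> a u v [r Kr] [s Ks]; rewrite /g (coeffE u r) // (coeffE v s) //.
  rewrite (coeffE _ (a * r + s)) ?scalerDl ?scalerA //.
  by case: HK => _ KD KZ; rewrite -scalerA opprD addrACA -scalerBr; apply/KD/Ks/KZ.
have hE v r : K (v - r *: z) -> h v = r *: e.
  by move=> Kv; rewrite hg; [exact: coeffE | exists r].
exists h; split=> //.
- by move=> k Kk; rewrite (hE k 0) ?scale0r ?subr0.
- rewrite (hE z 1) ?scale1r; last by rewrite subrr; case: HK.
  move=> e0; case: locR => [[_ m1 _] _]; apply/m1/ann_e.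
  by rewrite scale1r.
Qed.

Section LinearCompactness.
Context {R : comNzRingType} {E M : lmodType R}.
Hypotheses (Einj : injective_module E) (Ecog : cogenerator E).
Hypothesis dualM : matlis_dualizable E M.

Context {J : choiceType}.
Variables (j0 : J) (x : J -> M) (K : J -> M -> Prop).
Hypothesis HK : forall j, submod (K j).
Hypothesis directed : forall j k, exists l,
  [/\ subset_of (K l) (K j), subset_of (K l) (K k), K j (x l - x j) & K k (x l - x k)].

Let kills (phi : M -> E) j := forall v, K j v -> phi v = 0.

Let kills_coset phi j k :
  lin phi -> kills phi j -> kills phi k -> phi (x j) = phi (x k).
Proof.
move=> lphi phij phik; have [l [_ _ Klj Klk]] := directed j k.
move: (phij _ Klj) (phik _ Klk); rewrite !(linB lphi).
by move=> /subr0_eq <- /subr0_eq.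
Qed.

Let killing (phi : M -> E) := lin phi /\ exists j, kills phi j.

Let killing_submod : submod killing.
Proof.
split.
- by split=> [r u v|]; [rewrite /= scaler0 addr0 | exists j0].
- move=> f g [lf [j fj]] [lg [k gk]]; split.
    by move=> r u v; rewrite !fctE lf lg scalerDr addrACA.
  have [l [Klj Klk _ _]] := directed j k.
  by exists l => v Klv; rewrite fctE fj ?gk ?addr0 //; [apply: Klk | apply: Klj].
- move=> a f [lf [j fj]]; split.
    by move=> r u v; rewrite !fctE lf scalerDr !scalerA mulrC.
  by exists j => v Kjv; rewrite fctE fj ?scaler0.
Qed.

Let eval_coset (phi : M -> E) := phi (x (xget j0 (kills phi))).

Let eval_cosetE phi j : lin phi -> kills phi j -> eval_coset phi = phi (x j).
Proof.
move=> lphi phij; apply: kills_coset => //.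
by apply: (@xgetPex _ j0 (kills phi)); exists j.
Qed.

Lemma directed_cosets_meet : exists x0, forall j, K j (x0 - x j).
Proof.
have [h [lh h_eval]] : exists h : (M -> E) -> E,
    lin h /\ forall phi, killing phi -> h phi = eval_coset phi.
  apply: (injective_module_extend Einj killing_submod).
  move=> a f g [lf [j fj]] [lg [k gk]].
  have [l [Klj Klk _ _]] := directed j k.
  have fl : kills f l by move=> v /Klj /fj.
  have gl : kills g l by move=> v /Klk /gk.
  rewrite !(eval_cosetE _ l) //.
  - by move=> r u v; rewrite !fctE lf lg !scalerDr !scalerA [a * r]mulrC [LHS]addrACA.
  - by move=> v Klv; rewrite !fctE fl ?gl ?scaler0 ?addr0.
have [x0 h_x0] := dualM.2 h (fun r f g _ _ => lh r f g).
exists x0 => j; apply: contrapT => Kx0.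
have [f [lf fj fx0]] := Ecog _ _ (HK j) _ Kx0.
apply/fx0/eqP; rewrite (linB lf) subr_eq0 -h_x0 // h_eval; last by split=> //; exists j.
by rewrite (eval_cosetE _ _ lf fj).
Qed.

End LinearCompactness.

Section CohereditaryMeet.
Context {R : comNzRingType} {E : lmodType R}.
Hypotheses (Einj : injective_module E) (Ecog : cogenerator E).
Context {disp : Order.disp_t} {Omega : porderType disp}.
Hypothesis directed : forall i j : Omega, exists k, (k <= i)%O /\ (k <= j)%O.
Variable p : Omega -> pairop_t R.
Hypothesis p_submod : forall j (M : lmodType R) (L : M -> Prop),
  matlis_dualizable E M -> submod L -> submod (p j M L).
Hypothesis p_mono : forall i j : Omega, (i <= j)%O -> pairop_le E (p i) (p j).
Hypothesis p_coher : forall j, cohereditary E (p j).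

Lemma cohereditary_meet :
  cohereditary E (fun (M : lmodType R) (L : M -> Prop) (x : M) => forall j, p j M L x).
Proof.
move=> M M'' L N f dualM dualM'' HL HN LN lf f_onto kerf y.
have coher j := p_coher j M M'' L N f dualM dualM'' HL HN LN lf f_onto kerf y.
split=> [py|]; last by case=> x0 px0 fx0 j; apply/(coher j); exists x0.
have lift j : exists x, p j M N x /\ f x = y.
  by have [x px fx] := (coher j).1 (py j); exists x.
have [xs /all_and2 [pxs fxs]] := choice lift.
have [[j0 _]|Omega0] := pselect (exists j : Omega, True); last first.
  by have [x fx] := f_onto y; exists x => // j; case: Omega0; exists j.
pose K j v := p j M N v /\ L v.
have pN j : submod (p j M N) := p_submod j M N dualM HN.
have HK j : submod (K j) := submodI (pN j) HL.
have K_mono i j : (i <= j)%O -> subset_of (K i) (K j).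
  by move=> ij v [piv Lv]; split=> //; apply: p_mono ij M N dualM HN v piv.
have coset_mono i j : (i <= j)%O -> K j (xs i - xs j).
  move=> ij; split; last by apply/kerf; rewrite (linB lf) !fxs subrr.
  by apply: (submodB (pN j)); [apply: p_mono ij M N dualM HN _ (pxs i) | apply: pxs].
have [x0 Kx0] : exists x0, forall j, K j (x0 - xs j).
  apply: (directed_cosets_meet Einj Ecog dualM j0 xs K HK) => j k.
  have [l [lj lk]] := directed j k.
  by exists l; split;
    [apply: K_mono | apply: K_mono | apply: coset_mono | apply: coset_mono].
exists x0.
  move=> j; rewrite -(subrK (xs j) x0).
  by case: (pN j) => _ pD _; apply: pD (Kx0 j).1 (pxs j).
by apply/eqP; rewrite -(fxs j0) -subr_eq0 -(linB lf); apply/eqP/kerf; case: (Kx0 j0).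
Qed.

End CohereditaryMeet.

Local Close Scope ring_scope.

Theorem corollary6p10
  (R : comNzRingType) (m : R -> Prop)
  (Hloc : local_ring m) (Hnoeth : noetherian_ring R) (Hcompl : madic_complete m)
  (E : lmodType R) (HE : injective_hull_residue_field m E)
  (disp : Order.disp_t) (Omega : porderType disp)
  (HOmega : forall i j : Omega, exists k : Omega, (k <= i)%O /\ (k <= j)%O)
  (p : Omega -> pairop_t R)
  (Hp : forall j, is_pair_operation E (p j))
  (Hmono : forall i j : Omega, (i <= j)%O -> pairop_le E (p i) (p j))
  (Hcoher : forall j, cohereditary E (p j)) :
  cohereditary E (fun (M : lmodType R) (L : M -> Prop) (x : M) => forall j, p j M L x).
Proof.
apply: (cohereditary_meet HE.1 _ HOmega p _ Hmono Hcoher).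
- exact: injective_hull_residue_field_cogenerator Hloc Hnoeth HE.
- by move=> j; case: (Hp j).
Qed.
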